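(* Consider a liquid ($l$), its vapor ($v$) and a gas ($g$), each with extensive entropy $S_k$ of $(M_k,V_k,E_k)$ that is concave, positively homogeneous of degree 1, upper semi-continuous, with non-empty closed convex domain, and $\mathcal C^2$ with $\partial S_k/\partial E>0$; let $s_k(\tau,e)=S_k(1,\tau,e)$, $1/T_k=\partial_e s_k$, $p_k/T_k=\partial_\tau s_k$. Fix the gas mass fraction $\varphi_g\in[0,1]$ and define, for $\tau,e>0$, $$s_{PT}(\tau,e,\varphi_g)=\max\Big\{\sum_{k}\varphi_k s_k(\tau_k,e_k)\ :\ \varphi_l+\varphi_v=1-\varphi_g,\ e=\sum_k\varphi_ke_k,\ \tau=\varphi_l\tau_l+\varphi_g\tau_g,\ \varphi_v\tau_v=\varphi_g\tau_g\Big\},$$ the maximum being over $\varphi_l,\varphi_v\ge0$ and $(\tau_k,e_k)_k$, and assume it is attained at an interior point, at which the phases have a common temperature $T=T_l=T_g=T_v$ and the mixture pressure is $p=p_l=p_g+p_v$. Then $s_{PT}$ depends only on $(\tau,e)$ and satisfies $T\,ds_{PT}=de+p\,d\tau$ (i.e. $\partial_e s_{PT}=1/T$, $\partial_\tau s_{PT}=p/T$), where $T$ and $p$ are the mixture temperature and pressure at equilibrium.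
   Context: $\varphi_k$, $\tau_k$, $e_k$ are the mass fraction, specific volume and specific internal energy of phase $k$; vapor and gas occupy the same volume ($\varphi_v\tau_v=\varphi_g\tau_g$) while the liquid occupies a separate volume; mass transfer is allowed between liquid and vapor only. *)

From Stdlib Require Import Reals Lra.
From Coquelicot Require Import Coquelicot.
Open Scope R_scope.

(* ---------- Extensive entropies S(M,V,E) with domain D ⊆ R^3 ----------
   An extended-valued entropy S : R^3 -> R ∪ {-oo} is represented by its
   domain D (where S > -oo) and its (real) values on D. *)

Definition near3 (d : R) (x1 x2 x3 y1 y2 y3 : R) : Prop :=
  Rabs (y1 - x1) < d /\ Rabs (y2 - x2) < d /\ Rabs (y3 - x3) < d.

Definition interior3 (D : R -> R -> R -> Prop) (x1 x2 x3 : R) : Prop :=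
  exists d, 0 < d /\ forall y1 y2 y3, near3 d x1 x2 x3 y1 y2 y3 -> D y1 y2 y3.

Definition closed3 (D : R -> R -> R -> Prop) : Prop :=
  forall x1 x2 x3, ~ D x1 x2 x3 ->
    exists d, 0 < d /\ forall y1 y2 y3, near3 d x1 x2 x3 y1 y2 y3 -> ~ D y1 y2 y3.

Definition convex3 (D : R -> R -> R -> Prop) : Prop :=
  forall x1 x2 x3 y1 y2 y3 l, 0 <= l <= 1 -> D x1 x2 x3 -> D y1 y2 y3 ->
    D (l * x1 + (1 - l) * y1) (l * x2 + (1 - l) * y2) (l * x3 + (1 - l) * y3).

Definition concave_on3 (S : R -> R -> R -> R) (D : R -> R -> R -> Prop) : Prop :=
  forall x1 x2 x3 y1 y2 y3 l, 0 <= l <= 1 -> D x1 x2 x3 -> D y1 y2 y3 ->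
    l * S x1 x2 x3 + (1 - l) * S y1 y2 y3 <=
    S (l * x1 + (1 - l) * y1) (l * x2 + (1 - l) * y2) (l * x3 + (1 - l) * y3).

Definition pos_homogeneous3 (S : R -> R -> R -> R) (D : R -> R -> R -> Prop) : Prop :=
  forall l x1 x2 x3, 0 < l -> D x1 x2 x3 ->
    D (l * x1) (l * x2) (l * x3) /\ S (l * x1) (l * x2) (l * x3) = l * S x1 x2 x3.

(* upper semicontinuity of the extended function; since D is closed this
   amounts to upper semicontinuity of S restricted to D *)
Definition usc_on3 (S : R -> R -> R -> R) (D : R -> R -> R -> Prop) : Prop :=
  forall x1 x2 x3, D x1 x2 x3 -> forall eps, 0 < eps ->
    exists d, 0 < d /\ forall y1 y2 y3, D y1 y2 y3 -> near3 d x1 x2 x3 y1 y2 y3 ->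
      S y1 y2 y3 < S x1 x2 x3 + eps.

(* partial derivatives: i = 0 -> M, i = 1 -> V, i = 2 -> E *)
Definition pd (i : nat) (f : R -> R -> R -> R) : R -> R -> R -> R :=
  match i with
  | O => fun x1 x2 x3 => Derive (fun t => f t x2 x3) x1
  | 1%nat => fun x1 x2 x3 => Derive (fun t => f x1 t x3) x2
  | _ => fun x1 x2 x3 => Derive (fun t => f x1 x2 t) x3
  end.

Definition ex_pd (i : nat) (f : R -> R -> R -> R) (x1 x2 x3 : R) : Prop :=
  match i with
  | O => ex_derive (fun t => f t x2 x3) x1
  | 1%nat => ex_derive (fun t => f x1 t x3) x2
  | _ => ex_derive (fun t => f x1 x2 t) x3
  end.

Definition continuous_on3 (f : R -> R -> R -> R) (U : R -> R -> R -> Prop) : Prop :=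
  forall x1 x2 x3, U x1 x2 x3 -> forall eps, 0 < eps ->
    exists d, 0 < d /\ forall y1 y2 y3, U y1 y2 y3 -> near3 d x1 x2 x3 y1 y2 y3 ->
      Rabs (f y1 y2 y3 - f x1 x2 x3) < eps.

(* C^2 on an open set U: all first and second partial derivatives exist on U
   and all second partial derivatives are continuous on U (which implies that
   f is twice continuously differentiable on U). *)
Definition C2_on3 (f : R -> R -> R -> R) (U : R -> R -> R -> Prop) : Prop :=
  forall i j, (i < 3)%nat -> (j < 3)%nat ->
    (forall x1 x2 x3, U x1 x2 x3 -> ex_pd i f x1 x2 x3 /\ ex_pd j (pd i f) x1 x2 x3)
    /\ continuous_on3 (pd j (pd i f)) U.

Definition phase_entropy (S : R -> R -> R -> R) (D : R -> R -> R -> Prop) : Prop :=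
  (exists x1 x2 x3, D x1 x2 x3) /\ closed3 D /\ convex3 D /\
  concave_on3 S D /\ pos_homogeneous3 S D /\ usc_on3 S D /\
  C2_on3 S (interior3 D) /\
  (forall x1 x2 x3, interior3 D x1 x2 x3 -> 0 < pd 2 S x1 x2 x3).

Definition spec (S : R -> R -> R -> R) (tau e : R) : R := S 1 tau e.
Definition temperature (S : R -> R -> R -> R) (tau e : R) : R :=
  / Derive (fun e' => spec S tau e') e.
Definition pressure (S : R -> R -> R -> R) (tau e : R) : R :=
  temperature S tau e * Derive (fun t => spec S t e) tau.

Record config := mkConfig {
  phl : R; phv : R;
  taul : R; el : R; tauv : R; ev : R; taug : R; eg : R }.

Definition feasible (Dl Dv Dg : R -> R -> R -> Prop) (phg tau e : R) (c : config) : Prop :=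
  0 <= phl c /\ 0 <= phv c /\ phl c + phv c = 1 - phg /\
  e = phl c * el c + phv c * ev c + phg * eg c /\
  tau = phl c * taul c + phg * taug c /\
  phv c * tauv c = phg * taug c /\
  Dl 1 (taul c) (el c) /\ Dv 1 (tauv c) (ev c) /\ Dg 1 (taug c) (eg c).

Definition mix_value (Sl Sv Sg : R -> R -> R -> R) (phg : R) (c : config) : R :=
  phl c * spec Sl (taul c) (el c) + phv c * spec Sv (tauv c) (ev c)
  + phg * spec Sg (taug c) (eg c).

(* s_PT(tau,e,phg) := sup of the mixture entropy over feasible configurations,
   as an extended real (-oo if infeasible). *)
Definition sPT (Sl Sv Sg : R -> R -> R -> R) (Dl Dv Dg : R -> R -> R -> Prop)
  (phg tau e : R) : Rbar :=
  Lub_Rbar (fun x => exists c, feasible Dl Dv Dg phg tau e c /\ x = mix_value Sl Sv Sg phg c).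

(* Perturbing only the liquid phase of the maximiser c, by (a, b) / phl c in
   (tau_l, e_l), gives a feasible state at (tau + a, e + b); its entropy is a
   lower bound g(a, b) for s_PT there, and g has the partial derivatives 1/T_l
   and p_l/T_l at 0.  Mixing two feasible states phase by phase is feasible at
   the midpoint and, by concavity of each s_k, does not lower the entropy;
   since c is optimal this gives s_PT(tau + a, e + b) <= 2 g(0, 0) - g(-a, -b).
   The two bounds touch at 0 and are tangent there, so s_PT is differentiable
   with the same partial derivatives as g. *)

From Stdlib Require Import Reals Lra Lia.
From Coquelicot Require Import Coquelicot.
Open Scope R_scope.

Lemma Rabs_slope_lt (u h L eps : R) :
  h <> 0 -> Rabs (u / h - L) < eps <-> Rabs (u - L * h) < eps * Rabs h.
Proof.
  intros Hh.
  replace (u / h - L) with ((u - L * h) / h) by (field; exact Hh).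
  rewrite Rabs_div by exact Hh.
  apply Rlt_div_l, Rabs_pos_lt, Hh.
Qed.

Lemma is_derive_squeeze (f g : R -> R) (x0 L d : R) :
  0 < d -> is_derive g 0 L ->
  (forall h, Rabs h < d -> g h <= f (x0 + h) <= 2 * g 0 - g (- h)) ->
  is_derive f x0 L.
Proof.
  intros Hd Hg Hfg.
  assert (Hfx0 : f x0 = g 0).
  { destruct (Hfg 0) as [Hlo Hup]; [rewrite Rabs_R0; exact Hd|].
    rewrite Rplus_0_r, Ropp_0 in *. lra. }
  apply is_derive_Reals in Hg. apply is_derive_Reals.
  intros eps Heps. destruct (Hg eps Heps) as [dg Hdg].
  assert (Hmin : 0 < Rmin d dg) by (apply Rmin_pos; [exact Hd | apply cond_pos]).
  exists (mkposreal _ Hmin). intros h Hh0 Hh; simpl in Hh.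
  assert (Hhd : Rabs h < d) by (eapply Rlt_le_trans; [exact Hh | apply Rmin_l]).
  assert (Hhg : Rabs h < dg) by (eapply Rlt_le_trans; [exact Hh | apply Rmin_r]).
  assert (Hgh := Hdg h Hh0 Hhg).
  assert (Hgmh := Hdg (- h) (Ropp_neq_0_compat h Hh0) ltac:(now rewrite Rabs_Ropp)).
  rewrite Rplus_0_l in Hgh, Hgmh.
  apply Rabs_slope_lt in Hgh; [|exact Hh0].
  apply Rabs_slope_lt in Hgmh; [|now apply Ropp_neq_0_compat].
  rewrite Rabs_Ropp in Hgmh.
  apply Rabs_slope_lt; [exact Hh0|]. rewrite Hfx0.
  destruct (Hfg h Hhd).
  apply Rabs_def2 in Hgh. apply Rabs_def2 in Hgmh. apply Rabs_def1; lra.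
Qed.

Lemma is_derive_rescale (F : R -> R) (x0 m K D : R) :
  m <> 0 -> is_derive F x0 D -> is_derive (fun b => m * F (x0 + b / m) + K) 0 D.
Proof.
  intros Hm HF.
  auto_derive; rewrite Rmult_0_l, Rplus_0_r.
  - exists D; exact HF.
  - replace (Derive (fun x : R => F x) x0) with D by (symmetry; now apply is_derive_unique).
    field. exact Hm.
Qed.

Lemma Lub_Rbar_bounds (E : R -> Prop) (x0 M : R) :
  E x0 -> (forall x, E x -> x <= M) ->
  is_finite (Lub_Rbar E) /\ x0 <= real (Lub_Rbar E) <= M.
Proof.
  intros Hx0 HM. destruct (Lub_Rbar_correct E) as [Hub Hleast].
  assert (Hlo := Hub x0 Hx0).
  assert (Hup : Rbar_le (Lub_Rbar E) M) by (apply Hleast; exact HM).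
  destruct (Lub_Rbar E); simpl in *; try contradiction.
  split; [reflexivity | lra].
Qed.

Lemma spec_mass_concave (S : R -> R -> R -> R) (D : R -> R -> R -> Prop)
  (m1 t1 e1 m2 t2 e2 : R) :
  convex3 D -> concave_on3 S D -> 0 <= m1 -> 0 <= m2 -> D 1 t1 e1 -> D 1 t2 e2 ->
  exists t e0, D 1 t e0 /\ (m1 + m2) * t = m1 * t1 + m2 * t2 /\
    (m1 + m2) * e0 = m1 * e1 + m2 * e2 /\
    m1 * spec S t1 e1 + m2 * spec S t2 e2 <= (m1 + m2) * spec S t e0.
Proof.
  intros Hconv Hconc Hm1 Hm2 HD1 HD2.
  destruct (Req_dec (m1 + m2) 0) as [Hz | Hnz].
  - assert (m1 = 0) by lra; assert (m2 = 0) by lra; subst.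
    exists t1, e1. repeat split; [exact HD1 | lra | lra | lra].
  - set (l := m1 / (m1 + m2)).
    assert (Hl : 0 <= l <= 1).
    { unfold l; split; [apply Rdiv_le_0_compat; lra|].
      apply (Rdiv_le_1 m1 (m1 + m2)); lra. }
    pose proof (Hconv 1 t1 e1 1 t2 e2 l Hl HD1 HD2) as HD.
    pose proof (Hconc 1 t1 e1 1 t2 e2 l Hl HD1 HD2) as HS.
    replace (l * 1 + (1 - l) * 1) with 1 in HD, HS by ring.
    exists (l * t1 + (1 - l) * t2), (l * e1 + (1 - l) * e2).
    unfold spec; repeat split; [exact HD | unfold l; field; lra | unfold l; field; lra |].
    replace (m1 * S 1 t1 e1 + m2 * S 1 t2 e2)
      with ((m1 + m2) * (l * S 1 t1 e1 + (1 - l) * S 1 t2 e2)) by (unfold l; field; lra).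
    apply Rmult_le_compat_l; lra.
Qed.

Section Mixing.

Variables (Sl Sv Sg : R -> R -> R -> R) (Dl Dv Dg : R -> R -> R -> Prop) (phg : R).
Hypotheses (Hconvl : convex3 Dl) (Hconcl : concave_on3 Sl Dl)
  (Hconvv : convex3 Dv) (Hconcv : concave_on3 Sv Dv)
  (Hconvg : convex3 Dg) (Hconcg : concave_on3 Sg Dg) (Hphg : 0 <= phg).

Lemma feasible_midpoint (t1 e1 t2 e2 : R) (c1 c2 : config) :
  feasible Dl Dv Dg phg t1 e1 c1 -> feasible Dl Dv Dg phg t2 e2 c2 ->
  exists c, feasible Dl Dv Dg phg ((t1 + t2) / 2) ((e1 + e2) / 2) c /\
    mix_value Sl Sv Sg phg c1 + mix_value Sl Sv Sg phg c2 <= 2 * mix_value Sl Sv Sg phg c.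
Proof.
  intros (Hl1 & Hv1 & Hm1 & He1 & Ht1 & Hvg1 & HDl1 & HDv1 & HDg1)
         (Hl2 & Hv2 & Hm2 & He2 & Ht2 & Hvg2 & HDl2 & HDv2 & HDg2).
  destruct (spec_mass_concave Sl Dl (phl c1 / 2) (taul c1) (el c1)
              (phl c2 / 2) (taul c2) (el c2) Hconvl Hconcl ltac:(lra) ltac:(lra) HDl1 HDl2)
    as (tl & el' & HDl & Htl & Hel & Hsl).
  destruct (spec_mass_concave Sv Dv (phv c1 / 2) (tauv c1) (ev c1)
              (phv c2 / 2) (tauv c2) (ev c2) Hconvv Hconcv ltac:(lra) ltac:(lra) HDv1 HDv2)
    as (tv & ev' & HDv & Htv & Hev & Hsv).
  destruct (spec_mass_concave Sg Dg (phg / 2) (taug c1) (eg c1)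
              (phg / 2) (taug c2) (eg c2) Hconvg Hconcg ltac:(lra) ltac:(lra) HDg1 HDg2)
    as (tg & eg' & HDg & Htg & Heg & Hsg).
  replace (phg / 2 + phg / 2) with phg in Htg, Heg, Hsg by field.
  exists (mkConfig ((phl c1 + phl c2) / 2) ((phv c1 + phv c2) / 2) tl el' tv ev' tg eg').
  unfold feasible, mix_value in *; simpl.
  repeat split; try assumption; lra.
Qed.

Definition liquid_shift (c : config) (a b : R) : config :=
  mkConfig (phl c) (phv c) (taul c + a / phl c) (el c + b / phl c)
    (tauv c) (ev c) (taug c) (eg c).

Lemma feasible_liquid_shift (tau e a b : R) (c : config) :
  0 < phl c -> feasible Dl Dv Dg phg tau e c ->
  Dl 1 (taul c + a / phl c) (el c + b / phl c) ->
  feasible Dl Dv Dg phg (tau + a) (e + b) (liquid_shift c a b).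
Proof.
  intros Hphl (H0l & H0v & Hm & He & Ht & Hvg & HDl & HDv & HDg) HDl'.
  unfold feasible, liquid_shift; simpl.
  repeat split; try assumption; [rewrite He | rewrite Ht]; field; lra.
Qed.

Lemma interior3_liquid_shift (c : config) :
  0 < phl c -> interior3 Dl 1 (taul c) (el c) ->
  exists d, 0 < d /\ forall a b, Rabs a < d -> Rabs b < d ->
    Dl 1 (taul c + a / phl c) (el c + b / phl c).
Proof.
  intros Hphl [r [Hr Hnear]].
  exists (r * phl c); split; [nra|].
  intros a b Ha Hb. apply Hnear.
  assert (Hshift : forall x, Rabs x < r * phl c -> Rabs (x / phl c) < r).
  { intros x Hx. rewrite Rabs_div, (Rabs_pos_eq (phl c)) by lra.
    apply Rlt_div_l; lra. }
  unfold near3. rewrite Rminus_diag, Rabs_R0.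
  replace (taul c + a / phl c - taul c) with (a / phl c) by ring.
  replace (el c + b / phl c - el c) with (b / phl c) by ring.
  auto.
Qed.

Variables (tau e : R) (c : config).
Hypotheses (Hfeas : feasible Dl Dv Dg phg tau e c)
  (Hmax : forall c', feasible Dl Dv Dg phg tau e c' ->
            mix_value Sl Sv Sg phg c' <= mix_value Sl Sv Sg phg c)
  (Hphl : 0 < phl c) (Hint : interior3 Dl 1 (taul c) (el c)).

Let s (t e' : R) : Rbar := sPT Sl Sv Sg Dl Dv Dg phg t e'.
Let g (a b : R) : R := mix_value Sl Sv Sg phg (liquid_shift c a b).

Lemma sPT_liquid_shift_bounds :
  exists d, 0 < d /\ forall a b, Rabs a < d -> Rabs b < d ->
    is_finite (s (tau + a) (e + b)) /\
    g a b <= real (s (tau + a) (e + b)) <= 2 * g 0 0 - g (- a) (- b).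
Proof.
  destruct (interior3_liquid_shift c Hphl Hint) as [d [Hd Hshift]].
  exists d; split; [exact Hd|]. intros a b Ha Hb.
  assert (Hg00 : g 0 0 = mix_value Sl Sv Sg phg c).
  { unfold g, mix_value, liquid_shift; simpl. now rewrite !Rdiv_0_l, !Rplus_0_r. }
  apply Lub_Rbar_bounds.
  - exists (liquid_shift c a b); split; [|reflexivity].
    now apply feasible_liquid_shift, Hshift.
  - intros x [c' [Hc' ->]].
    assert (Hopp : feasible Dl Dv Dg phg (tau + - a) (e + - b) (liquid_shift c (- a) (- b)))
      by (apply feasible_liquid_shift, Hshift; rewrite ?Rabs_Ropp; assumption).
    destruct (feasible_midpoint _ _ _ _ _ _ Hc' Hopp) as [cm [Hcm Hvalue]].
    replace ((tau + a + (tau + - a)) / 2) with tau in Hcm by field.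
    replace ((e + b + (e + - b)) / 2) with e in Hcm by field.
    pose proof (Hmax cm Hcm). rewrite Hg00. unfold g. lra.
Qed.

Lemma sPT_is_derive_e (De : R) :
  is_derive (fun x => Sl 1 (taul c) x) (el c) De ->
  is_derive (fun e' => real (s tau e')) e De.
Proof.
  intros HDe. destruct sPT_liquid_shift_bounds as [d [Hd Hbounds]].
  apply (is_derive_squeeze (fun e' => real (s tau e')) (g 0) e De d Hd).
  - eapply is_derive_ext;
      [| apply (is_derive_rescale (fun x => Sl 1 (taul c) x) (el c) (phl c)
               (phv c * spec Sv (tauv c) (ev c) + phg * spec Sg (taug c) (eg c)) De);
         [lra | exact HDe]].
    intros b. unfold g, mix_value, liquid_shift, spec; simpl.
    rewrite Rdiv_0_l, Rplus_0_r; ring.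
  - intros h Hh.
    destruct (Hbounds 0 h) as [_ Hb]; [now rewrite Rabs_R0 | exact Hh |].
    rewrite Rplus_0_r, Ropp_0 in Hb. exact Hb.
Qed.

Lemma sPT_is_derive_tau (Dt : R) :
  is_derive (fun x => Sl 1 x (el c)) (taul c) Dt ->
  is_derive (fun t => real (s t e)) tau Dt.
Proof.
  intros HDt. destruct sPT_liquid_shift_bounds as [d [Hd Hbounds]].
  apply (is_derive_squeeze (fun t => real (s t e)) (fun a => g a 0) tau Dt d Hd).
  - eapply is_derive_ext;
      [| apply (is_derive_rescale (fun x => Sl 1 x (el c)) (taul c) (phl c)
               (phv c * spec Sv (tauv c) (ev c) + phg * spec Sg (taug c) (eg c)) Dt);
         [lra | exact HDt]].
    intros a. unfold g, mix_value, liquid_shift, spec; simpl.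
    rewrite Rdiv_0_l, Rplus_0_r; ring.
  - intros h Hh.
    destruct (Hbounds h 0) as [_ Hb]; [exact Hh | now rewrite Rabs_R0 |].
    rewrite Rplus_0_r, Ropp_0 in Hb. exact Hb.
Qed.

Lemma sPT_equilibrium_differential (De Dt : R) :
  is_derive (fun x => Sl 1 (taul c) x) (el c) De ->
  is_derive (fun x => Sl 1 x (el c)) (taul c) Dt ->
  (exists d, 0 < d /\ forall tau' e', Rabs (tau' - tau) < d -> Rabs (e' - e) < d ->
      is_finite (s tau' e')) /\
  is_derive (fun e' => real (s tau e')) e De /\
  is_derive (fun t => real (s t e)) tau Dt.
Proof.
  intros HDe HDt.
  split; [|split; [exact (sPT_is_derive_e De HDe) | exact (sPT_is_derive_tau Dt HDt)]].
  destruct sPT_liquid_shift_bounds as [d [Hd Hbounds]].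
  exists d; split; [exact Hd|]. intros tau' e' Ht He.
  replace tau' with (tau + (tau' - tau)) by ring.
  replace e' with (e + (e' - e)) by ring.
  now apply Hbounds.
Qed.

End Mixing.

Theorem proposition2p5
  (Sl Sv Sg : R -> R -> R -> R) (Dl Dv Dg : R -> R -> R -> Prop)
  (phg tau e : R) (c : config) (T p : R) :
  phase_entropy Sl Dl -> phase_entropy Sv Dv -> phase_entropy Sg Dg ->
  0 <= phg <= 1 -> 0 < tau -> 0 < e ->
  (* the maximum is attained at c *)
  feasible Dl Dv Dg phg tau e c ->
  (forall c', feasible Dl Dv Dg phg tau e c' ->
     mix_value Sl Sv Sg phg c' <= mix_value Sl Sv Sg phg c) ->
  (* c is an interior point *)
  0 < phl c -> 0 < phv c ->
  interior3 Dl 1 (taul c) (el c) ->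
  interior3 Dv 1 (tauv c) (ev c) ->
  interior3 Dg 1 (taug c) (eg c) ->
  (* common temperature T and mixture pressure p at c *)
  temperature Sl (taul c) (el c) = T ->
  temperature Sg (taug c) (eg c) = T ->
  temperature Sv (tauv c) (ev c) = T ->
  pressure Sl (taul c) (el c) = p ->
  pressure Sg (taug c) (eg c) + pressure Sv (tauv c) (ev c) = p ->
  (* conclusion: s_PT is finite near (tau,e) and T ds_PT = de + p dtau *)
  (exists d, 0 < d /\ forall tau' e', Rabs (tau' - tau) < d -> Rabs (e' - e) < d ->
      is_finite (sPT Sl Sv Sg Dl Dv Dg phg tau' e')) /\
  is_derive (fun e' => real (sPT Sl Sv Sg Dl Dv Dg phg tau e')) e (/ T) /\
  is_derive (fun t => real (sPT Sl Sv Sg Dl Dv Dg phg t e)) tau (p / T).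
Proof.
  (* Only the liquid phase is perturbed. *)
  intros PL PV PG Hphg _ _ Hfeas Hmax Hphl _ Hint _ _ HTl _ _ Hpl _.
  destruct PL as (_ & _ & Hconvl & Hconcl & _ & _ & HC2 & HdE).
  destruct PV as (_ & _ & Hconvv & Hconcv & _).
  destruct PG as (_ & _ & Hconvg & Hconcg & _).
  destruct (HC2 2%nat 0%nat ltac:(lia) ltac:(lia)) as [HC2e _].
  destruct (HC2 1%nat 0%nat ltac:(lia) ltac:(lia)) as [HC2t _].
  destruct (HC2e 1 (taul c) (el c) Hint) as [Hexe _].
  destruct (HC2t 1 (taul c) (el c) Hint) as [Hext _].
  specialize (HdE 1 (taul c) (el c) Hint).
  simpl in Hexe, Hext, HdE.
  unfold pressure, temperature, spec in HTl, Hpl.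
  subst T p.
  replace (/ / _) with (Derive (fun x => Sl 1 (taul c) x) (el c)) by now rewrite Rinv_inv.
  replace (_ / _) with (Derive (fun t => Sl 1 t (el c)) (taul c)) by (field; lra).
  now apply (sPT_equilibrium_differential Sl Sv Sg Dl Dv Dg phg Hconvl Hconcl Hconvv Hconcv
               Hconvg Hconcg (proj1 Hphg) tau e c Hfeas Hmax Hphl Hint); apply Derive_correct.
Qed.
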